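(* Let $f,g:\mathbb{R}^n\to\mathbb{R}$ be convex functions, and suppose $\nabla f$ exists and is Lipschitz continuous with constant $L(f)>0$. Let $F=f+g$ and let $x^*$ be an optimal solution of $\min_x F(x)$. Fix $0<\beta\le 1$ and $\mu$ with $\beta/L(f)\le\mu\le 1/L(f)$. Run the following algorithm (Alternating linearization method with skipping step) from $x^0=y^0\in\mathbb{R}^n$ and $\lambda^0$ with $-\lambda^0\in\partial g(y^0)$: for $k=0,1,2,\dots$, 1. $x^{k+1}:=\arg\min_x Q(x,y^k)$, where $Q(x,y^k):=f(x)+g(y^k)-\langle\lambda^k,x-y^k\rangle+\frac{1}{2\mu}\|x-y^k\|_2^2$; 2. if $F(x^{k+1})>Q(x^{k+1},y^k)$, then reset $x^{k+1}:=y^k$; 3. $y^{k+1}:=\arg\min_y Q_f(x^{k+1},y)$, where $Q_f(x,y):=f(x)+\langle\nabla f(x),y-x\rangle+\frac{1}{2\mu}\|y-x\|_2^2+g(y)$; 4. $\lambda^{k+1}:=\nabla f(x^{k+1})-(x^{k+1}-y^{k+1})/\mu$. For $k\ge 1$ let $k_n$ denote the number of iterations among the first $k$ iterations (indices $0,\dots,k-1$) in which the inequality $F(x^{j+1})\le Q(x^{j+1},y^j)$ held in step 2 (i.e., no reset occurred). Then for every $k\ge1$, $$F(y^k)-F(x^* )\le\frac{\|x^0-x^*\|^2}{2\mu(k+k_n)}.$$ Consequently $F(y^k)\to F(x^* )$, and the number of iterations needed to obtain $F(y^k)-F(x^* )\le\epsilon$ is $O(1/\epsilon)$ (specifically, it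 suffices that $k\ge \frac{L(f)\|x^0-x^*\|^2}{2\beta\epsilon}$).
   Context: $\partial g(y)$ denotes the subdifferential of the convex function $g$ at $y$. All norms are Euclidean norms. *)

From HB Require Import structures.
From mathcomp Require Import all_boot all_order all_algebra.
From mathcomp Require Import all_classical all_reals all_analysis.
Set Implicit Arguments. Unset Strict Implicit. Unset Printing Implicit Defensive.
Import Order.TTheory GRing.Theory Num.Theory.
Import numFieldNormedType.Exports.
Local Open Scope ring_scope.

Definition dotv {R : realType} {n : nat} (u v : 'rV[R]_n) : R :=
  \sum_(i < n) u ord0 i * v ord0 i.
Definition enorm {R : realType} {n : nat} (u : 'rV[R]_n) : R :=
  Num.sqrt (dotv u u).

Definition convex_fun {R : realType} {n : nat} (f : 'rV[R]_n -> R) : Prop :=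
  forall (x y : 'rV[R]_n) (t : R), 0 <= t -> t <= 1 ->
    f ((1 - t) *: x + t *: y) <= (1 - t) * f x + t * f y.

Definition in_subdiff {R : realType} {n : nat} (g : 'rV[R]_n -> R)
  (y v : 'rV[R]_n) : Prop :=
  forall z, g y + dotv v (z - y) <= g z.

Definition is_gradient {R : realType} {n : nat} (f : 'rV[R]_n -> R)
  (gradf : 'rV[R]_n -> 'rV[R]_n) : Prop :=
  forall x, differentiable f x /\ forall h, 'd f x h = dotv (gradf x) h.

Definition Qfun {R : realType} {n : nat} (f g : 'rV[R]_n -> R) (mu : R)
  (lam y x : 'rV[R]_n) : R :=
  f x + g y - dotv lam (x - y) + (2 * mu)^-1 * enorm (x - y) ^+ 2.

Definition Qf {R : realType} {n : nat} (f g : 'rV[R]_n -> R)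
  (gradf : 'rV[R]_n -> 'rV[R]_n) (mu : R) (x y : 'rV[R]_n) : R :=
  f x + dotv (gradf x) (y - x) + (2 * mu)^-1 * enorm (y - x) ^+ 2 + g y.

From HB Require Import structures.
From mathcomp Require Import all_boot all_order all_algebra.
From mathcomp Require Import all_classical all_reals all_analysis.
From mathcomp Require Import ring lra.
Set Implicit Arguments. Unset Strict Implicit. Unset Printing Implicit Defensive.
Import Order.TTheory GRing.Theory Num.Theory.
Import numFieldNormedType.Exports.
Local Open Scope classical_set_scope.
Local Open Scope ring_scope.

(* Both the gradient step (step 3) and an accepted step 1 are proximal steps
   on F = f + g: for step 3 because mu <= 1/L makes the linearization of f plus
   the proximal term a majorant of f (descent lemma), for step 1 because
   -lam^k is a subgradient of g at y^k, so that Q(., y^k) minorizes F up to the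
   proximal term, while the test of step 2 bounds F by Q at the new point.
   A proximal step from p to w obeys the three-point inequality
     F w + |u - w|^2 / 2mu <= F u + |u - p|^2 / 2mu.
   Taking u = xstar and summing over the iterations telescopes the distances;
   each iteration contributes the gap F(y^(j+1)) - F xstar, each accepted one
   also F(x^(j+1)) - F xstar, and all of these dominate F(y^k) - F xstar
   because F decreases along y^0, x^1, y^1, x^2, ... *)

Section InnerProduct.
Variables (R : realType) (n : nat).
Implicit Types u v w : 'rV[R]_n.

Lemma dotvC u v : dotv u v = dotv v u.
Proof. by apply: eq_bigr => i _; rewrite mulrC. Qed.

Lemma dotvDl u v w : dotv (u + v) w = dotv u w + dotv v w.
Proof. by rewrite /dotv -big_split; apply: eq_bigr => i _; rewrite !mxE mulrDl. Qed.

Lemma dotvNl u v : dotv (- u) v = - dotv u v.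
Proof. by rewrite /dotv -sumrN; apply: eq_bigr => i _; rewrite !mxE mulNr. Qed.

Lemma dotvZl (a : R) u v : dotv (a *: u) v = a * dotv u v.
Proof. by rewrite /dotv mulr_sumr; apply: eq_bigr => i _; rewrite !mxE mulrA. Qed.

Lemma dotvBl u v w : dotv (u - v) w = dotv u w - dotv v w.
Proof. by rewrite dotvDl dotvNl. Qed.

Lemma dotvDr u v w : dotv u (v + w) = dotv u v + dotv u w.
Proof. by rewrite dotvC dotvDl !(dotvC u). Qed.

Lemma dotvNr u v : dotv u (- v) = - dotv u v.
Proof. by rewrite dotvC dotvNl dotvC. Qed.

Lemma dotvZr (a : R) u v : dotv u (a *: v) = a * dotv u v.
Proof. by rewrite dotvC dotvZl dotvC. Qed.

Lemma dotvBr u v w : dotv u (v - w) = dotv u v - dotv u w.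
Proof. by rewrite dotvDr dotvNr. Qed.

Lemma dotv_ge0 u : 0 <= dotv u u.
Proof. by apply: sumr_ge0 => i _; rewrite -expr2 sqr_ge0. Qed.

Lemma dotv_eq0 u : (dotv u u == 0) = (u == 0).
Proof.
apply/idP/eqP => [|->]; last by rewrite /dotv big1 // => i _; rewrite mxE mul0r.
rewrite psumr_eq0 => [/allP u0|i _]; last by rewrite -expr2 sqr_ge0.
apply/rowP => j; rewrite mxE.
by have := u0 j (mem_index_enum j); rewrite mulf_eq0 orbb => /eqP.
Qed.

Lemma enorm_ge0 u : 0 <= enorm u.
Proof. exact: sqrtr_ge0. Qed.

Lemma enorm_sqr u : enorm u ^+ 2 = dotv u u.
Proof. by rewrite sqr_sqrtr // dotv_ge0. Qed.

Lemma enorm_eq0 u : (enorm u == 0) = (u == 0).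
Proof. by rewrite sqrtr_eq0 le_eqVlt ltNge dotv_ge0 orbF dotv_eq0. Qed.

Lemma enorm0 : enorm (0 : 'rV[R]_n) = 0.
Proof. by apply/eqP; rewrite enorm_eq0. Qed.

Lemma enormN u : enorm (- u) = enorm u.
Proof. by rewrite /enorm dotvNl dotvNr opprK. Qed.

Lemma enormZ (a : R) u : enorm (a *: u) = `|a| * enorm u.
Proof. by rewrite /enorm dotvZl dotvZr mulrA sqrtrM ?sqr_ge0 // sqrtr_sqr. Qed.

Lemma enorm_sqrD u v :
  enorm (u + v) ^+ 2 = enorm u ^+ 2 + 2 * dotv u v + enorm v ^+ 2.
Proof. by rewrite !enorm_sqr dotvDl !dotvDr (dotvC v u); ring. Qed.

Lemma dotv_le_enorm u v (r : R) :
  0 < r -> enorm u <= r * enorm v -> dotv u v <= r * enorm v ^+ 2.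
Proof.
move=> r0 uv.
have : enorm u ^+ 2 <= (r * enorm v) ^+ 2.
  by rewrite ler_pXn2r // nnegrE ?enorm_ge0 // mulr_ge0 ?enorm_ge0 ?ltW.
rewrite exprMn !enorm_sqr => uv2.
have := dotv_ge0 (u - r *: v).
rewrite !dotvBl !dotvBr !dotvZl !dotvZr (dotvC v u) => h.
suff : 2 * r * (dotv u v - r * dotv v v) <= 0.
  by rewrite pmulr_rle0 ?mulr_gt0 //; lra.
rewrite expr2 in uv2; lra.
Qed.

End InnerProduct.

Lemma ler_of_small_sub (R : realFieldType) (A B C : R) : 0 <= C ->
  (forall t, 0 < t -> t <= 1 -> B - t * C <= A) -> B <= A.
Proof.
move=> C0 hB; rewrite leNgt; apply/negP => AB.
have D0 : 0 < B - A + C + 1 by lra.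
pose t := (B - A) / (B - A + C + 1).
have t0 : 0 < t by rewrite divr_gt0 //; lra.
have t1 : t <= 1 by rewrite ler_pdivrMr //; lra.
have tC : t * C < B - A.
  rewrite mulrAC ltr_pdivrMr //.
  have : 0 < B - A by lra.
  nra.
have := hB t t0 t1; lra.
Qed.

Section ConvexAnalysis.
Variables (R : realType) (n : nat).
Implicit Types (h : 'rV[R]_n -> R) (a p w : 'rV[R]_n).

Lemma prox_subgradient h a p w (c : R) : convex_fun h -> 0 < c ->
  (forall u, h w + dotv a w + c * enorm (w - p) ^+ 2
             <= h u + dotv a u + c * enorm (u - p) ^+ 2) ->
  in_subdiff h w (- (a + (2 * c) *: (w - p))).
Proof.
(* Minimality along the segment from [w] to [u] together with convexity of [h]
   gives the subgradient inequality up to an error [t c |u - w|^2], for every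
   [t] in ]0, 1]. *)
move=> hc c0 hmin u; set d := u - w.
rewrite dotvNl dotvDl dotvZl.
apply: (@ler_of_small_sub _ _ _ (c * dotv d d)).
  by rewrite mulr_ge0 ?dotv_ge0 ?ltW.
move=> t t0 t1.
have hcv := hc w u t (ltW t0) t1.
have hm := hmin ((1 - t) *: w + t *: u).
have e1 : (1 - t) *: w + t *: u = w + t *: d.
  by apply/rowP => j; rewrite !mxE; ring.
have e2 : w + t *: d - p = (w - p) + t *: d by rewrite addrAC.
rewrite e1 in hcv hm.
rewrite e2 [in X in _ <= X]enorm_sqrD !enorm_sqr (dotvDr a) !dotvZr !dotvZl in hm.
have : 0 <= t * (h u - h w + dotv a d + 2 * c * dotv (w - p) d
                 + t * (c * dotv d d)) by nra.
rewrite pmulr_rge0 //; lra.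
Qed.

Lemma prox_three_point h a p w (c : R) : convex_fun h -> 0 < c ->
  (forall u, h w + dotv a w + c * enorm (w - p) ^+ 2
             <= h u + dotv a u + c * enorm (u - p) ^+ 2) ->
  forall u, h w + dotv a w + c * enorm (w - p) ^+ 2 + c * enorm (u - w) ^+ 2
            <= h u + dotv a u + c * enorm (u - p) ^+ 2.
Proof.
move=> hc c0 hmin u.
have hsub := prox_subgradient hc c0 hmin u.
have -> : u - p = (w - p) + (u - w) by apply/rowP => j; rewrite !mxE; ring.
have -> : dotv a u = dotv a w + dotv a (u - w) by rewrite dotvBr; ring.
rewrite [in X in _ <= X]enorm_sqrD; rewrite dotvNl dotvDl dotvZl in hsub; lra.
Qed.

Lemma is_derive_line (f : 'rV[R]_n -> R) gradf (x d : 'rV[R]_n) (t : R) :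
  is_gradient f gradf ->
  is_derive t 1 (fun s : R => f (s *: d + x)) (dotv (gradf (t *: d + x)) d).
Proof.
move=> hgr; have [df dfE] := hgr (t *: d + x).
have E : (fun h : R => h^-1 *: (((fun s : R => f (s *: d + x)) \o shift t) (h *: 1)
                                 - f (t *: d + x)))
   = (fun h : R => h^-1 *: ((f \o shift (t *: d + x)) (h *: d) - f (t *: d + x))).
  apply: funext => h /=; congr (_ *: (f _ - _)).
  by apply/rowP => j; rewrite !mxE [_%:A]mulr1; ring.
have dv : derivable f (t *: d + x) d by exact: diff_derivable.
apply: DeriveDef; first by rewrite /derivable E.
by rewrite /derive E -/(derive f (t *: d + x) d) deriveE // dfE.
Qed.

Lemma convex_gradient_ineq (f : 'rV[R]_n -> R) gradf (x u : 'rV[R]_n) :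
  convex_fun f -> is_gradient f gradf ->
  f x + dotv (gradf x) (u - x) <= f u.
Proof.
move=> hc hgr; set d := u - x.
have hd := is_derive_line x d 0 hgr; rewrite scale0r add0r in hd.
set h := (fun s : R => f (s *: d + x)) in hd.
have cv : (fun s : R => s^-1 *: ((h \o shift 0) (s *: 1) - h 0)) @ 0^'
            --> dotv (gradf x) d.
  by rewrite -(@derive_val _ _ _ _ _ _ _ hd); exact: (@ex_derive _ _ _ _ _ _ _ hd).
rewrite leNgt; apply/negP => H.
have Hn0 : \forall s \near 0^', f u - f x < s^-1 *: ((h \o shift 0) (s *: 1) - h 0).
  by apply: (cvgr_gt _ cv); lra.
have Hn : \forall s \near 0^'+, f u - f x < s^-1 *: ((h \o shift 0) (s *: 1) - h 0).
  move: Hn0; rewrite /dnbhs /at_right !near_withinE.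
  by apply: filterS => s hs s0; apply: hs; rewrite /= gt_eqF.
have [s [[s0 s1] /=]] := filter_ex
  (filterI (filterI (nbhs_right_gt 0) (nbhs_right_le ltr01)) Hn).
rewrite /h /= [_%:A]mulr1 addr0 scale0r add0r.
have -> : s *: d + x = (1 - s) *: x + s *: u by apply/rowP => j; rewrite !mxE; ring.
rewrite -[_ *: _]/(_ * _) => hq.
have hcv := hc x u s (ltW s0) s1.
have : s^-1 * (f ((1 - s) *: x + s *: u) - f x) <= f u - f x.
  rewrite ler_pdivrMl //; lra.
lra.
Qed.

Lemma is_derive_quadratic (a K t : R) :
  is_derive t 1 (fun s : R => a * s + K * (s * s)) (a + K * (2 * t)).
Proof.
have := is_deriveD (is_deriveZ a (@is_derive_id _ R^o t 1))
  (is_deriveZ K (is_deriveM (@is_derive_id _ R^o t 1) (@is_derive_id _ R^o t 1))).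
by move/is_derive_eq; apply; rewrite /= /GRing.scale /=; ring.
Qed.

Lemma descent_lemma (f : 'rV[R]_n -> R) gradf (L : R) (x y : 'rV[R]_n) :
  is_gradient f gradf -> 0 < L ->
  (forall u v, enorm (gradf u - gradf v) <= L * enorm (u - v)) ->
  f y <= f x + dotv (gradf x) (y - x) + L / 2 * enorm (y - x) ^+ 2.
Proof.
move=> hgr L0 hL; set d := y - x.
set a := dotv (gradf x) d; set K := L / 2 * enorm d ^+ 2.
pose G s := f (s *: d + x) - (a * s + K * (s * s)).
have dG (t : R) :
    is_derive t 1 G (dotv (gradf (t *: d + x)) d - (a + K * (2 * t))).
  exact: is_deriveB (is_derive_line x d t hgr) (is_derive_quadratic a K t).
have cG : {within `[0, 1], continuous G}.
  by apply: derivable_within_continuous => t _; case: (dG t).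
have [c /andP[c0 _] MVT01] := MVT ltr01 (fun t _ => dG t) cG.
have G1 : G 1 = f y - a - K by rewrite /G scale1r mul1r mulr1 /d subrK; ring.
have G0 : G 0 = f x by rewrite /G scale0r add0r mulr0 mul0r; ring.
have Lip : enorm (gradf (c *: d + x) - gradf x) <= L * c * enorm d.
  by have := hL (c *: d + x) x; rewrite addrK enormZ gtr0_norm // mulrA.
have := dotv_le_enorm (mulr_gt0 L0 c0) Lip.
rewrite dotvBl -/a; move: MVT01; rewrite G1 G0 subr0 mulr1 /K; lra.
Qed.

End ConvexAnalysis.

Section ProximalSteps.
Variables (R : realType) (n : nat) (f g : 'rV[R]_n -> R) (mu : R).
Hypotheses (f_convex : convex_fun f) (g_convex : convex_fun g)
  (mu_gt0 : 0 < mu).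

Let c_gt0 : 0 < (2 * mu)^-1. Proof. by rewrite invr_gt0 mulr_gt0. Qed.

Lemma accepted_step_ineq (lam q z : 'rV[R]_n) :
  in_subdiff g q (- lam) ->
  (forall u, Qfun f g mu lam q z <= Qfun f g mu lam q u) ->
  f z + g z <= Qfun f g mu lam q z ->
  forall u, f z + g z + (2 * mu)^-1 * enorm (u - z) ^+ 2
            <= f u + g u + (2 * mu)^-1 * enorm (u - q) ^+ 2.
Proof.
move=> hsub hmin hF u.
have hmin' v : f z + dotv (- lam) z + (2 * mu)^-1 * enorm (z - q) ^+ 2
               <= f v + dotv (- lam) v + (2 * mu)^-1 * enorm (v - q) ^+ 2.
  by have := hmin v; rewrite /Qfun !dotvBr !dotvNl; lra.
have := prox_three_point f_convex c_gt0 hmin' u.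
have := hsub u; move: hF; rewrite /Qfun !dotvBr !dotvNl; lra.
Qed.

Variables (gradf : 'rV[R]_n -> 'rV[R]_n) (L : R).
Hypotheses (f_grad : is_gradient f gradf) (L_gt0 : 0 < L)
  (gradf_lipschitz : forall u v, enorm (gradf u - gradf v) <= L * enorm (u - v))
  (muL_le1 : mu * L <= 1).

Section GradientStep.
Variables (p w : 'rV[R]_n).
Hypothesis w_min : forall u, Qf f g gradf mu p w <= Qf f g gradf mu p u.

Let w_min_prox u : g w + dotv (gradf p) w + (2 * mu)^-1 * enorm (w - p) ^+ 2
  <= g u + dotv (gradf p) u + (2 * mu)^-1 * enorm (u - p) ^+ 2.
Proof. by have := w_min u; rewrite /Qf !dotvBr; lra. Qed.

Lemma grad_step_subgradient : in_subdiff g w (- (gradf p - mu^-1 *: (p - w))).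
Proof.
have -> : gradf p - mu^-1 *: (p - w) = gradf p + (2 * (2 * mu)^-1) *: (w - p).
  rewrite invfM mulrA divff ?mul1r ?pnatr_eq0 //.
  by apply/rowP => j; rewrite !mxE; ring.
exact: prox_subgradient g_convex c_gt0 w_min_prox.
Qed.

Lemma grad_step_ineq u : f w + g w + (2 * mu)^-1 * enorm (u - w) ^+ 2
  <= f u + g u + (2 * mu)^-1 * enorm (u - p) ^+ 2.
Proof.
have := prox_three_point g_convex c_gt0 w_min_prox u.
have := descent_lemma p w f_grad L_gt0 gradf_lipschitz.
have := convex_gradient_ineq p u f_convex f_grad.
have L_le : L / 2 <= (2 * mu)^-1.
  rewrite -(@ler_pM2l _ (2 * mu)) ?mulr_gt0 // mulfV ?gt_eqF ?mulr_gt0 //.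
  by have -> : 2 * mu * (L / 2) = mu * L by field.
have := ler_wpM2r (exprn_ge0 2 (enorm_ge0 (w - p))) L_le.
rewrite !dotvBr; lra.
Qed.

End GradientStep.
End ProximalSteps.

Section AlternatingLinearization.
Variables (R : realType) (n : nat) (f g : 'rV[R]_n -> R)
  (gradf : 'rV[R]_n -> 'rV[R]_n) (L mu : R) (xstar : 'rV[R]_n)
  (x y z lam : nat -> 'rV[R]_n).
Hypotheses (f_convex : convex_fun f) (g_convex : convex_fun g)
  (f_grad : is_gradient f gradf) (L_gt0 : 0 < L)
  (gradf_lipschitz : forall u v, enorm (gradf u - gradf v) <= L * enorm (u - v))
  (xstar_opt : forall u, f xstar + g xstar <= f u + g u)
  (mu_gt0 : 0 < mu) (muL_le1 : mu * L <= 1)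
  (x0_y0 : x 0%N = y 0%N) (lam0_subgrad : in_subdiff g (y 0%N) (- lam 0%N))
  (z_min : forall k u, Qfun f g mu (lam k) (y k) (z k.+1)
                       <= Qfun f g mu (lam k) (y k) u)
  (x_def : forall k, x k.+1 = if f (z k.+1) + g (z k.+1) >
                                 Qfun f g mu (lam k) (y k) (z k.+1)
                              then y k else z k.+1)
  (y_min : forall k u, Qf f g gradf mu (x k.+1) (y k.+1)
                       <= Qf f g gradf mu (x k.+1) u)
  (lam_def : forall k, lam k.+1 = gradf (x k.+1) - mu^-1 *: (x k.+1 - y k.+1)).

Let F u := f u + g u.
Let c := (2 * mu)^-1.
Let c_gt0 : 0 < c. Proof. by rewrite invr_gt0 mulr_gt0. Qed.
Let accepted j := F (z j.+1) <= Qfun f g mu (lam j) (y j) (z j.+1).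

Lemma lam_subgradient k : in_subdiff g (y k) (- lam k).
Proof.
case: k => [//|k]; rewrite lam_def.
exact (grad_step_subgradient g_convex mu_gt0 (y_min k)).
Qed.

Lemma y_step_ineq k u :
  F (y k.+1) + c * enorm (u - y k.+1) ^+ 2 <= F u + c * enorm (u - x k.+1) ^+ 2.
Proof.
exact (grad_step_ineq f_convex g_convex mu_gt0 f_grad L_gt0 gradf_lipschitz
  muL_le1 (y_min k) u).
Qed.

Lemma accepted_x_step_ineq k u : accepted k ->
  F (x k.+1) + c * enorm (u - x k.+1) ^+ 2 <= F u + c * enorm (u - y k) ^+ 2.
Proof.
move=> acc; have -> : x k.+1 = z k.+1 by rewrite x_def ifN // -leNgt; exact acc.
exact (accepted_step_ineq f_convex mu_gt0 (lam_subgradient k) (z_min k) acc u).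
Qed.

Lemma rejected_x_step k : ~~ accepted k -> x k.+1 = y k.
Proof. by move=> rej; rewrite x_def ifT // ltNge; exact rej. Qed.

Lemma F_y_le_x k : F (y k.+1) <= F (x k.+1).
Proof.
have := y_step_ineq k (x k.+1); rewrite subrr enorm0 expr0n mulr0 addr0.
have := mulr_ge0 (ltW c_gt0) (exprn_ge0 2 (enorm_ge0 (x k.+1 - y k.+1))); lra.
Qed.

Lemma F_x_le_y k : F (x k.+1) <= F (y k).
Proof.
have [acc|rej] := boolP (accepted k); last by rewrite rejected_x_step.
have := accepted_x_step_ineq (y k) acc; rewrite subrr enorm0 expr0n mulr0 addr0.
have := mulr_ge0 (ltW c_gt0) (exprn_ge0 2 (enorm_ge0 (y k - x k.+1))); lra.
Qed.

Lemma F_y_nonincreasing : nonincreasing_seq (fun k => F (y k)).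
Proof.
by apply/nonincreasing_seqP => k; exact: le_trans (F_y_le_x k) (F_x_le_y k).
Qed.

Lemma telescoped_gap_bound k :
  \sum_(j < k) (F (y j.+1) - F xstar + (accepted j)%:R * (F (x j.+1) - F xstar))
    + c * enorm (xstar - y k) ^+ 2 <= c * enorm (xstar - y 0%N) ^+ 2.
Proof.
elim: k => [|k IH]; first by rewrite big_ord0 add0r.
rewrite big_ord_recr /=; have := y_step_ineq k xstar.
case acc: (accepted k).
  by have := accepted_x_step_ineq xstar acc; rewrite mul1r; lra.
by rewrite mul0r addr0 rejected_x_step ?acc //; lra.
Qed.

Lemma weighted_gap_bound k :
  (k + \sum_(j < k) accepted j)%:R * (F (y k) - F xstar)
    <= c * enorm (x 0%N - xstar) ^+ 2.
Proof.
have -> : (k + \sum_(j < k) accepted j)%:R * (F (y k) - F xstar)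
    = \sum_(j < k) (F (y k) - F xstar + (accepted j)%:R * (F (y k) - F xstar)).
  rewrite big_split /= sumr_const card_ord -mulr_suml natrD mulrDl.
  by rewrite -natr_sum mulr_natl.
have -> : enorm (x 0%N - xstar) = enorm (xstar - y 0%N).
  by rewrite -x0_y0 -opprB enormN.
apply: le_trans (telescoped_gap_bound k); rewrite -[X in X <= _]addr0 lerD //.
  apply: ler_sum => j _.
  have yk_le := F_y_nonincreasing (ltn_ord j).
  by have := F_y_le_x j; case: (accepted j); rewrite /= ?mul1r ?mul0r; lra.
by rewrite mulr_ge0 ?exprn_ge0 ?enorm_ge0 ?ltW.
Qed.

Lemma rate_bound k : (1 <= k)%N ->
  F (y k) - F xstar
    <= enorm (x 0%N - xstar) ^+ 2 / (2 * mu * (k + \sum_(j < k) accepted j)%:R).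
Proof.
move=> k_ge1; have N_gt0 : 0 < (k + \sum_(j < k) accepted j)%:R :> R.
  by rewrite ltr0n addn_gt0 k_ge1.
set N := (k + _)%:R in N_gt0 *.
have -> : enorm (x 0%N - xstar) ^+ 2 / (2 * mu * N)
    = c * enorm (x 0%N - xstar) ^+ 2 / N.
  by rewrite /c invfM mulrA [_ * (2 * mu)^-1]mulrC.
by rewrite ler_pdivlMr // mulrC weighted_gap_bound.
Qed.

Lemma complexity_bound (eps : R) k : 0 < eps ->
  enorm (x 0%N - xstar) ^+ 2 / (2 * mu * eps) <= k%:R -> F (y k) - F xstar <= eps.
Proof.
move=> eps_gt0; rewrite ler_pdivrMr ?mulr_gt0 //.
case: k => [|k] D_le.
  have : enorm (x 0%N - xstar) ^+ 2 == 0.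
    by rewrite eq_le exprn_ge0 ?enorm_ge0 // andbT -(mul0r (2 * mu * eps)).
  rewrite sqrf_eq0 enorm_eq0 subr_eq0 x0_y0 => /eqP ->.
  by rewrite subrr ltW.
set K := k.+1%:R in D_le *.
have gap_ge0 : 0 <= F (y k.+1) - F xstar by rewrite subr_ge0; exact: xstar_opt.
have K_le : K <= (k.+1 + \sum_(j < k.+1) accepted j)%:R by rewrite ler_nat leq_addr.
have cD_le : c * enorm (x 0%N - xstar) ^+ 2 <= K * eps.
  have c2mu : c * (2 * mu) = 1 by rewrite mulVf // gt_eqF // mulr_gt0.
  have -> : K * eps = c * (K * (2 * mu * eps)).
    by rewrite mulrCA [c * _]mulrA c2mu mul1r.
  exact (ler_wpM2l (ltW c_gt0) D_le).
rewrite -(ler_pM2l (_ : 0 < K)) ?ltr0n //.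
exact (le_trans (ler_wpM2r gap_ge0 K_le)
  (le_trans (weighted_gap_bound k.+1) cD_le)).
Qed.

Lemma F_y_cvg : (fun k => F (y k)) @ \oo --> F xstar.
Proof.
apply/cvgrPdist_le => eps eps_gt0.
set B := enorm (x 0%N - xstar) ^+ 2 / (2 * mu * eps).
have B_ge0 : 0 <= B by rewrite divr_ge0 ?exprn_ge0 ?enorm_ge0 // ltW // !mulr_gt0.
apply: filterS (nbhs_infty_ge (Num.Def.archi_bound B)) => k k_ge /=.
rewrite distrC ger0_norm ?subr_ge0 ?xstar_opt //.
apply: complexity_bound eps_gt0 _.
by apply: le_trans (ltW (archi_boundP B_ge0)) _; rewrite ler_nat.
Qed.

End AlternatingLinearization.

Unset Implicit Arguments.

Theorem theorem1 (R : realType) (n : nat)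
  (f g : 'rV[R]_n -> R) (gradf : 'rV[R]_n -> 'rV[R]_n) (L beta mu : R)
  (xstar : 'rV[R]_n) (x y z lam : nat -> 'rV[R]_n) :
  convex_fun f -> convex_fun g ->
  is_gradient f gradf ->
  0 < L ->
  (forall u v, enorm (gradf u - gradf v) <= L * enorm (u - v)) ->
  (forall u, f xstar + g xstar <= f u + g u) ->
  0 < beta -> beta <= 1 ->
  beta / L <= mu -> mu <= 1 / L ->
  x 0%N = y 0%N ->
  in_subdiff g (y 0%N) (- lam 0%N) ->
  (forall k u, Qfun f g mu (lam k) (y k) (z k.+1)
                 <= Qfun f g mu (lam k) (y k) u) ->
  (forall k, x k.+1 = if f (z k.+1) + g (z k.+1) >
                          Qfun f g mu (lam k) (y k) (z k.+1)
                       then y k else z k.+1) ->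
  (forall k u, Qf f g gradf mu (x k.+1) (y k.+1)
                 <= Qf f g gradf mu (x k.+1) u) ->
  (forall k, lam k.+1 = gradf (x k.+1) - mu^-1 *: (x k.+1 - y k.+1)) ->
  let F := fun u => f u + g u in
  let kn := fun k : nat =>
    \sum_(j < k) nat_of_bool (F (z j.+1) <= Qfun f g mu (lam j) (y j) (z j.+1)) in
  (forall k : nat, (1 <= k)%N ->
     F (y k) - F xstar
       <= enorm (x 0%N - xstar) ^+ 2 / (2 * mu * (k + kn k)%N%:R)) /\
  ((fun k => F (y k)) @ \oo --> F xstar) /\
  (forall (eps : R) (k : nat), 0 < eps ->
     L * enorm (x 0%N - xstar) ^+ 2 / (2 * beta * eps) <= k%:R ->
     F (y k) - F xstar <= eps).
Proof.
move=> f_cvx g_cvx f_grad L_gt0 lip opt beta_gt0 _ beta_le mu_le x0 lam0 z_min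
  x_def y_min lam_def F kn.
have mu_gt0 : 0 < mu by apply: lt_le_trans beta_le; rewrite divr_gt0.
have muL : mu * L <= 1 by rewrite -ler_pdivlMr.
split; last split.
- exact (rate_bound xstar f_cvx g_cvx f_grad L_gt0 lip mu_gt0 muL x0 lam0
    z_min x_def y_min lam_def).
- exact (F_y_cvg f_cvx g_cvx f_grad L_gt0 lip opt mu_gt0 muL x0 lam0
    z_min x_def y_min lam_def).
move=> eps k eps_gt0 k_ge.
apply: (complexity_bound f_cvx g_cvx f_grad L_gt0 lip opt mu_gt0 muL x0 lam0
  z_min x_def y_min lam_def eps_gt0).
apply: le_trans k_ge.
have -> : L * enorm (x 0%N - xstar) ^+ 2 / (2 * beta * eps)
    = enorm (x 0%N - xstar) ^+ 2 / (2 * (beta / L) * eps).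
  by field; rewrite !gt_eqF.
apply: ler_wpM2l; first by rewrite exprn_ge0 ?enorm_ge0.
rewrite lef_pV2 ?posrE ?mulr_gt0 ?divr_gt0 ?invr_gt0 //.
by rewrite ler_pM2r // ler_pM2l.
Qed.
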